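(* Let $c_1>0$, $b_1=\frac{\sqrt{1+4c_1}-1}{2}$ and $b_4=\frac{1+\sqrt{1+4c_1}}{2}$ (so $b_1<\sqrt{c_1}<b_4$). Put $$F_1(\alpha)=\int_{\alpha}^{\sqrt{c_1}}\frac{(c_1-\rho^2)^{2m-1}}{\{\rho^{2m}-(c_1-\rho^2)^{2m}\}^{\frac{2m-1}{2m}}}\,d\rho\ \ (b_1\le\alpha\le\sqrt{c_1}),\qquad F_2(\alpha)=\int_{\sqrt{c_1}}^{\alpha}\frac{(\rho^2-c_1)^{2m-1}}{\{\rho^{2m}-(\rho^2-c_1)^{2m}\}^{\frac{2m-1}{2m}}}\,d\rho\ \ (\sqrt{c_1}\le\alpha\le b_4),$$ which are finite, and let $d_1=F_1(b_1)>0$, $d_3=F_2(b_4)>0$. In the $(\alpha,z)$ half-plane let $\Gamma$ be the curve obtained by traversing consecutively $G_1=\{(\alpha,-F_1(\alpha)):b_1\le\alpha\le\sqrt{c_1}\}$ with $\alpha$ increasing, $G_2=\{(\alpha,-F_2(\alpha)):\sqrt{c_1}\le\alpha\le b_4\}$ with $\alpha$ increasing, $G_3=\{(\alpha,F_2(\alpha)-2d_3):\sqrt{c_1}\le\alpha\le b_4\}$ with $\alpha$ decreasing, and $G_4=\{(\alpha,F_1(\alpha)-2d_3):b_1\le\alpha\le\sqrt{c_1}\}$ with $\alpha$ decreasing; $\Gamma$ runs from $(b_1,-d_1)$ to $(b_1,d_1-2d_3)$. Let $\Gamma^*$ be the curve obtained by concatenating the translates $\Gamma+k(0,2d_1-2d_3)$,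 $k\in\mathbb{Z}$, in increasing order of $k$. Then $\Gamma^*$ admits a regular $C^2$ parametrization $t\mapsto(\alpha^*(t),\beta^*(t))$, $t\in\mathbb{R}$, traversing it in this order, and the rotational surface $$f^*(t,v)=(\alpha^*(t)\cos v,\ \alpha^*(t)\sin v,\ \beta^*(t)),\qquad (t,v)\in\mathbb{R}\times[0,2\pi],$$ has a Birkhoff–Gauss map that is $C^1$ on the whole domain (with orientation: $\nabla\Phi(\eta)$ is a positive multiple of $f^*_t\times f^*_v$) and has constant Minkowski mean curvature $1$.
   Context: Fix an integer $m\ge 2$. Let $\Phi(x_1,x_2,x_3)=(x_1^2+x_2^2)^m+x_3^{2m}$ and let $\|\cdot\|$ be the norm on $\mathbb{R}^3$ whose unit sphere is $S=\{x\in\mathbb{R}^3:\Phi(x)=1\}$ (a smooth, strictly convex surface). For a surface given by a parametrization $f(s,v)$, its Birkhoff–Gauss map $\eta$ is the map into $S$ defined by requiring $\eta\in S$ and $\nabla\Phi(\eta)=\mu\, f_s\times f_v$ for some function $\mu>0$, where $\times$ is the standard cross product (so the tangent plane of $S$ at $\eta(p)$ is parallel to $T_pM$, and $d\eta_p$ is an endomorphism of $T_pM$). Where $\eta$ is $C^1$, the Minkowski mean curvature is $H=\tfrac12\operatorname{trace}(d\eta_p)$. *)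

From Stdlib Require Import Reals ZArith.
From Coquelicot Require Import Coquelicot.
Open Scope R_scope.

Definition Phi (m : nat) (x1 x2 x3 : R) : R :=
  (x1 ^ 2 + x2 ^ 2) ^ m + x3 ^ (2 * m).

Definition gradPhi1 m x1 x2 x3 := Derive (fun s => Phi m s x2 x3) x1.
Definition gradPhi2 m x1 x2 x3 := Derive (fun s => Phi m x1 s x3) x2.
Definition gradPhi3 m x1 x2 x3 := Derive (fun s => Phi m x1 x2 s) x3.

Definition b1 (c1 : R) : R := (sqrt (1 + 4 * c1) - 1) / 2.
Definition b4 (c1 : R) : R := (1 + sqrt (1 + 4 * c1)) / 2.

Definition integrand1 (m : nat) (c1 rho : R) : R :=
  (c1 - rho ^ 2) ^ (2 * m - 1) /
  Rpower (rho ^ (2 * m) - (c1 - rho ^ 2) ^ (2 * m)) (INR (2 * m - 1) / INR (2 * m)).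

Definition integrand2 (m : nat) (c1 rho : R) : R :=
  (rho ^ 2 - c1) ^ (2 * m - 1) /
  Rpower (rho ^ (2 * m) - (rho ^ 2 - c1) ^ (2 * m)) (INR (2 * m - 1) / INR (2 * m)).

(* F1(alpha) = int_alpha^{sqrt c1} integrand1; at alpha = b1 the integrand is
   singular, so the (improper) integral is the limit from the right. *)
Definition F1 (m : nat) (c1 alpha : R) : R :=
  if Req_EM_T alpha (b1 c1)
  then RInt_gen (integrand1 m c1) (at_right (b1 c1)) (at_point (sqrt c1))
  else RInt (integrand1 m c1) alpha (sqrt c1).

(* F2(alpha) = int_{sqrt c1}^alpha integrand2; improper at alpha = b4. *)
Definition F2 (m : nat) (c1 alpha : R) : R :=
  if Req_EM_T alpha (b4 c1)
  then RInt_gen (integrand2 m c1) (at_point (sqrt c1)) (at_left (b4 c1))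
  else RInt (integrand2 m c1) (sqrt c1) alpha.

Definition dval1 m c1 := F1 m c1 (b1 c1).
Definition dval3 m c1 := F2 m c1 (b4 c1).

(* ---------- reference parametrization of Gamma^* ----------
   For s in [4k+j, 4k+j+1) (j = 0,1,2,3) the point runs linearly in alpha
   through G_{j+1} (in the prescribed direction), translated by k(0, 2d1-2d3). *)
Definition floorR (x : R) : R := IZR (Int_part x).

Definition Gamma_ref (m : nat) (c1 s : R) : R * R :=
  let p := sqrt c1 in
  let k := floorR (s / 4) in
  let r := s - 4 * k in
  let sh := k * (2 * dval1 m c1 - 2 * dval3 m c1) in
  if Rlt_dec r 1 then
    let a := b1 c1 + r * (p - b1 c1) in (a, - F1 m c1 a + sh)
  else if Rlt_dec r 2 then
    let a := p + (r - 1) * (b4 c1 - p) in (a, - F2 m c1 a + sh)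
  else if Rlt_dec r 3 then
    let a := b4 c1 - (r - 2) * (b4 c1 - p) in (a, F2 m c1 a - 2 * dval3 m c1 + sh)
  else
    let a := p - (r - 3) * (p - b1 c1) in (a, F1 m c1 a - 2 * dval3 m c1 + sh).

Definition C2_fun (f : R -> R) : Prop :=
  (forall t, ex_derive f t) /\
  (forall t, ex_derive (Derive f) t) /\
  (forall t, continuous (Derive (Derive f)) t).

Definition pd_t (g : R -> R -> R) (t v : R) : R := Derive (fun s => g s v) t.
Definition pd_v (g : R -> R -> R) (t v : R) : R := Derive (fun s => g t s) v.

Definition C1_fun2 (g : R -> R -> R) : Prop :=
  (forall t v, ex_derive (fun s => g s v) t /\ ex_derive (fun s => g t s) v) /\
  (forall p : R * R,
     continuous (fun q : R * R => g (fst q) (snd q)) p /\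
     continuous (fun q : R * R => pd_t g (fst q) (snd q)) p /\
     continuous (fun q : R * R => pd_v g (fst q) (snd q)) p).

Definition fs1 (al : R -> R) (t v : R) : R := al t * cos v.
Definition fs2 (al : R -> R) (t v : R) : R := al t * sin v.
Definition fs3 (be : R -> R) (t v : R) : R := be t.

Definition is_BG_map_at (m : nat) (g1 g2 g3 e1 e2 e3 : R -> R -> R) (t v : R) : Prop :=
  let x1 := pd_t g1 t v in let x2 := pd_t g2 t v in let x3 := pd_t g3 t v in
  let y1 := pd_v g1 t v in let y2 := pd_v g2 t v in let y3 := pd_v g3 t v in
  let n1 := x2 * y3 - x3 * y2 in
  let n2 := x3 * y1 - x1 * y3 in
  let n3 := x1 * y2 - x2 * y1 in
  let h1 := e1 t v in let h2 := e2 t v in let h3 := e3 t v in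
  Phi m h1 h2 h3 = 1 /\
  exists mu : R, 0 < mu /\
    gradPhi1 m h1 h2 h3 = mu * n1 /\
    gradPhi2 m h1 h2 h3 = mu * n2 /\
    gradPhi3 m h1 h2 h3 = mu * n3.

(* Minkowski mean curvature H = (1/2) trace(d eta) equals h at (t,v):
   the matrix (a_ij) of d eta in the basis (g_t, g_v) of the tangent plane,
   d eta(g_t) = eta_t = a11 g_t + a21 g_v, d eta(g_v) = eta_v = a12 g_t + a22 g_v,
   has (a11 + a22)/2 = h. *)
Definition mink_mean_curv_is (g1 g2 g3 e1 e2 e3 : R -> R -> R) (t v h : R) : Prop :=
  exists a11 a12 a21 a22 : R,
    pd_t e1 t v = a11 * pd_t g1 t v + a21 * pd_v g1 t v /\
    pd_t e2 t v = a11 * pd_t g2 t v + a21 * pd_v g2 t v /\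
    pd_t e3 t v = a11 * pd_t g3 t v + a21 * pd_v g3 t v /\
    pd_v e1 t v = a12 * pd_t g1 t v + a22 * pd_v g1 t v /\
    pd_v e2 t v = a12 * pd_t g2 t v + a22 * pd_v g2 t v /\
    pd_v e3 t v = a12 * pd_t g3 t v + a22 * pd_v g3 t v /\
    (a11 + a22) / 2 = h.

From Stdlib Require Import Reals ZArith Lra Lia Psatz FunctionalExtensionality.
From Coquelicot Require Import Coquelicot.
Open Scope R_scope.

(* Parametrize the profile by the angle [t] of its Birkhoff-Gauss map: [(eta_r t, eta_z t)] runs
   over the unit circle of the planar norm [(r^(2m) + z^(2m))^(1/2m)], and the rotational surface
   with profile [(alpha, beta)] has Birkhoff-Gauss map [(eta_r cos v, eta_r sin v, eta_z)] as soon
   as [(alpha', beta')] is a positive multiple of [(eta_r', eta_z')]. Its Minkowski mean curvature is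
   then [(disc + eta_r) / (2 alpha)] with [disc = sqrt (eta_r^2 + 4 c1)], which is 1 for the positive
   root [alpha] of [alpha^2 - eta_r alpha = c1]; everything is smooth in [t] on the whole line.
   The substitution [rho = alpha t] turns [F1] and [F2] into [- beta] on [[0, pi/2]] and
   [[pi/2, pi]], the improper integrals at [b1 = alpha 0] and [b4 = alpha pi] included; the
   symmetry [t |-> 2 pi - t] yields the arcs [G3] and [G4], and [beta (t + 2 pi) = beta t + 2 d1 - 2 d3]
   the translates. [Gamma_ref] is reached from [t] through an increasing homeomorphism [phi] that is
   affine in [alpha] on each quarter period. *)

(** * Twice continuously differentiable functions *)


(* Coquelicot's rules are stated in normed modules; these instances over [R] let [apply] unify. *)
Lemma is_derive_Rplus (f g : R -> R) x a b :
  is_derive f x a -> is_derive g x b -> is_derive (fun y => f y + g y) x (a + b).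
Proof. intros Hf Hg; exact (is_derive_plus f g x a b Hf Hg). Qed.

Lemma is_derive_Ropp (f : R -> R) x a : is_derive f x a -> is_derive (fun y => - f y) x (- a).
Proof. intros Hf; exact (is_derive_opp f x a Hf). Qed.

Lemma is_derive_Rmult (f g : R -> R) x a b : is_derive f x a -> is_derive g x b ->
  is_derive (fun y => f y * g y) x (a * g x + f x * b).
Proof. intros Hf Hg; exact (is_derive_mult f g x a b Hf Hg Rmult_comm). Qed.

Lemma is_derive_Rcomp (f g : R -> R) x a b : is_derive g x b -> is_derive f (g x) a ->
  is_derive (fun y => f (g y)) x (a * b).
Proof. intros Hg Hf; rewrite Rmult_comm; exact (is_derive_comp f g x a b Hf Hg). Qed.

Lemma continuous_Rplus (f g : R -> R) x :
  continuous f x -> continuous g x -> continuous (fun y => f y + g y) x.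
Proof. intros Hf Hg; exact (continuous_plus f g x Hf Hg). Qed.

Lemma continuous_Rmult (f g : R -> R) x :
  continuous f x -> continuous g x -> continuous (fun y => f y * g y) x.
Proof. intros Hf Hg; exact (continuous_mult f g x Hf Hg). Qed.

Lemma continuous_Ropp (f : R -> R) x : continuous f x -> continuous (fun y => - f y) x.
Proof. intros Hf; exact (continuous_opp f x Hf). Qed.

Lemma is_derive_continuous (f : R -> R) (x l : R) : is_derive f x l -> continuous f x.
Proof. intros H; apply (@ex_derive_continuous R_AbsRing R_NormedModule); exists l; exact H. Qed.

Definition is_C2 (f : R -> R) : Prop :=
  exists f1 f2 : R -> R,
    forall x, is_derive f x (f1 x) /\ is_derive f1 x (f2 x) /\ continuous f2 x.

Lemma is_C2_continuous f x : is_C2 f -> continuous f x.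
Proof. intros [f1 [f2 H]]; apply (is_derive_continuous _ _ (f1 x)), H. Qed.

Lemma is_C2_C2_fun f : is_C2 f -> C2_fun f.
Proof.
  intros [f1 [f2 H]].
  assert (E1 : forall x, Derive f x = f1 x) by (intros x; apply is_derive_unique, H).
  assert (E2 : forall x, Derive (Derive f) x = f2 x).
  { intros x; rewrite (Derive_ext _ f1 x E1); apply is_derive_unique, H. }
  split; [|split]; intros t.
  - exists (f1 t); apply H.
  - apply (ex_derive_ext f1); [intros; symmetry; apply E1|]. exists (f2 t); apply H.
  - apply (continuous_ext f2); [intros; symmetry; apply E2|]. apply H.
Qed.

Lemma is_C2_const c : is_C2 (fun _ => c).
Proof.
  exists (fun _ => 0), (fun _ => 0); intros x.
  split; [|split]; [auto_derive; auto.. | apply continuous_const].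
Qed.

Lemma is_C2_id : is_C2 (fun x => x).
Proof.
  exists (fun _ => 1), (fun _ => 0); intros x.
  split; [|split]; [auto_derive; auto.. | apply continuous_const].
Qed.

Lemma is_C2_plus f g : is_C2 f -> is_C2 g -> is_C2 (fun x => f x + g x).
Proof.
  intros [f1 [f2 Hf]] [g1 [g2 Hg]].
  exists (fun x => f1 x + g1 x), (fun x => f2 x + g2 x); intros x.
  destruct (Hf x) as (? & ? & ?), (Hg x) as (? & ? & ?).
  split; [|split]; [apply is_derive_Rplus.. | apply continuous_Rplus]; assumption.
Qed.

Lemma is_C2_opp f : is_C2 f -> is_C2 (fun x => - f x).
Proof.
  intros [f1 [f2 Hf]].
  exists (fun x => - f1 x), (fun x => - f2 x); intros x.
  destruct (Hf x) as (? & ? & ?).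
  split; [|split]; [apply is_derive_Ropp.. | apply continuous_Ropp]; assumption.
Qed.

Lemma is_C2_mult f g : is_C2 f -> is_C2 g -> is_C2 (fun x => f x * g x).
Proof.
  intros [f1 [f2 Hf]] [g1 [g2 Hg]].
  exists (fun x => f1 x * g x + f x * g1 x),
    (fun x => (f2 x * g x + f1 x * g1 x) + (f1 x * g1 x + f x * g2 x)); intros x.
  destruct (Hf x) as (Hf1 & Hf2 & Hf3), (Hg x) as (Hg1 & Hg2 & Hg3).
  split; [|split].
  - apply is_derive_Rmult; assumption.
  - apply is_derive_Rplus; apply is_derive_Rmult; assumption.
  - repeat apply continuous_Rplus; apply continuous_Rmult; try assumption;
      eapply is_derive_continuous; eassumption.
Qed.

Lemma is_C2_pow f n : is_C2 f -> is_C2 (fun x => f x ^ n).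
Proof.
  intros Hf; induction n as [|n IH].
  - exact (is_C2_const 1).
  - apply (is_C2_mult f (fun x => f x ^ n)); assumption.
Qed.

Lemma is_C2_comp_on (D : R -> Prop) (g g1 g2 f : R -> R) :
  (forall y, D y -> is_derive g y (g1 y) /\ is_derive g1 y (g2 y) /\ continuous g2 y) ->
  is_C2 f -> (forall x, D (f x)) -> is_C2 (fun x => g (f x)).
Proof.
  intros Hg [f1 [f2 Hf]] HD.
  exists (fun x => g1 (f x) * f1 x), (fun x => g2 (f x) * f1 x * f1 x + g1 (f x) * f2 x); intros x.
  destruct (Hf x) as (Hf1 & Hf2 & Hf3), (Hg (f x) (HD x)) as (Hg1 & Hg2 & Hg3).
  assert (Cf : continuous f x) by (eapply is_derive_continuous; eassumption).
  assert (Cf1 : continuous f1 x) by (eapply is_derive_continuous; eassumption).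
  assert (Cg1 : continuous g1 (f x)) by (eapply is_derive_continuous; eassumption).
  split; [|split].
  - apply is_derive_Rcomp; assumption.
  - apply (is_derive_Rmult (fun y => g1 (f y)) f1); [apply is_derive_Rcomp|]; assumption.
  - apply continuous_Rplus; repeat apply continuous_Rmult; try assumption;
      apply (continuous_comp f); assumption.
Qed.

Lemma is_C2_exp f : is_C2 f -> is_C2 (fun x => exp (f x)).
Proof.
  intros Hf; apply (is_C2_comp_on (fun _ => True) exp exp exp); auto.
  intros y _; split; [|split]; [auto_derive; auto; ring.. | apply continuous_exp].
Qed.

Lemma is_C2_sin f : is_C2 f -> is_C2 (fun x => sin (f x)).
Proof.
  intros Hf; apply (is_C2_comp_on (fun _ => True) sin cos (fun y => - sin y)); auto.
  intros y _; split; [|split]; [auto_derive; auto; ring.. | apply continuous_Ropp, continuous_sin].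
Qed.

Lemma is_C2_cos f : is_C2 f -> is_C2 (fun x => cos (f x)).
Proof.
  intros Hf; apply (is_C2_comp_on (fun _ => True) cos (fun y => - sin y) (fun y => - cos y)); auto.
  intros y _; split; [|split]; [auto_derive; auto; ring.. | apply continuous_Ropp, continuous_cos].
Qed.

Lemma is_C2_ln f : is_C2 f -> (forall x, 0 < f x) -> is_C2 (fun x => ln (f x)).
Proof.
  intros Hf Hpos; apply (is_C2_comp_on (fun y => 0 < y) ln Rinv (fun y => - / (y * y))); auto.
  intros y Hy; split; [|split].
  - auto_derive; [lra | field; lra].
  - auto_derive; [lra | field; lra].
  - apply (is_derive_continuous _ _ (2 / (y * y * y))); auto_derive; [nra | field; lra].
Qed.

Lemma is_C2_inv f : is_C2 f -> (forall x, 0 < f x) -> is_C2 (fun x => / f x).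
Proof.
  intros Hf Hpos; apply (is_C2_comp_on (fun y => 0 < y) Rinv (fun y => - / (y * y))
    (fun y => 2 / (y * y * y))); auto.
  intros y Hy; assert (Hy3 : 0 < y * y * y) by (repeat apply Rmult_lt_0_compat; lra).
  split; [|split].
  - auto_derive; [lra | field; lra].
  - auto_derive; [nra | field; lra].
  - apply (is_derive_continuous _ _ (- 6 / (y * y * y * y))); auto_derive; [lra | field; lra].
Qed.

Lemma is_C2_sqrt f : is_C2 f -> (forall x, 0 < f x) -> is_C2 (fun x => sqrt (f x)).
Proof.
  intros Hf Hpos; apply (is_C2_comp_on (fun y => 0 < y) sqrt (fun y => / (2 * sqrt y))
    (fun y => - / (4 * y * sqrt y))); auto.
  intros y Hy; assert (Hs : 0 < sqrt y) by (apply sqrt_lt_R0; exact Hy).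
  assert (Hss : sqrt y * sqrt y = y) by (apply sqrt_sqrt; lra).
  split; [|split].
  - auto_derive; [lra | field; lra].
  - auto_derive; [repeat split; lra |].
    replace (4 * y * sqrt y) with (4 * (sqrt y * sqrt y) * sqrt y) by (rewrite Hss; ring).
    field; lra.
  - apply (@ex_derive_continuous R_AbsRing R_NormedModule); auto_derive; repeat split; nra.
Qed.

(** * Monotonicity, reparametrization and improper integrals *)

Lemma continuity_of_continuous (f : R -> R) : (forall x, continuous f x) -> continuity f.
Proof. intros Hf x; apply continuity_pt_filterlim, Hf. Qed.

Lemma IVT_prod (f : R -> R) a b y : (forall x, continuous f x) -> a <= b ->
  (f a - y) * (f b - y) <= 0 -> exists x, a <= x <= b /\ f x = y.
Proof.
  intros Hf Hab Hy.
  assert (Hc : continuity (fun x => f x - y)).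
  { apply continuity_minus; [apply continuity_of_continuous, Hf | apply continuity_const; now intros ? ?]. }
  destruct (IVT_cor _ a b Hc Hab Hy) as [x [Hx Ex]]; exists x; split; [exact Hx | lra].
Qed.

Lemma derive_sign_lt (f df : R -> R) a b p x y :
  (forall z, is_derive f z (df z)) -> (forall z, continuous df z) ->
  (forall z, a < z < b -> df z <> 0) -> a < p < b ->
  a <= x -> x < y -> y <= b -> 0 < (f y - f x) * df p.
Proof.
  intros Hd Hc Hnz Hp Hx Hxy Hy.
  assert (Hsign : forall z, a < z < b -> 0 < df z * df p).
  { intros z Hz; destruct (Rlt_le_dec 0 (df z * df p)) as [|Hle]; [assumption | exfalso].
    destruct (Rle_dec z p).
    - destruct (IVT_prod df z p 0 Hc) as (c & Hc' & Ec); [lra | lra |].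
      apply (Hnz c); [lra | exact Ec].
    - destruct (IVT_prod df p z 0 Hc) as (c & Hc' & Ec); [lra | lra |].
      apply (Hnz c); [lra | exact Ec]. }
  destruct (MVT_cor2 f df x y Hxy) as (c & Ec & Hc');
    [intros; apply is_derive_Reals, Hd |].
  rewrite Ec; assert (0 < df c * df p) by (apply Hsign; lra); nra.
Qed.

Lemma derive_sign_mono (f df : R -> R) a b x y :
  (forall z, is_derive f z (df z)) -> (forall z, continuous df z) ->
  (forall z, a < z < b -> df z <> 0) ->
  a <= x -> x < y -> y <= b -> 0 < (f y - f x) * (f b - f a).
Proof.
  intros Hd Hc Hnz Hx Hxy Hy.
  set (p := (a + b) / 2); assert (Hp : a < p < b) by (unfold p; lra).
  pose proof (derive_sign_lt f df a b p x y Hd Hc Hnz Hp Hx Hxy Hy).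
  pose proof (derive_sign_lt f df a b p a b Hd Hc Hnz Hp (Rle_refl a) ltac:(lra) (Rle_refl b)).
  assert (0 < (f y - f x) * (f b - f a) * (df p * df p)) by nra.
  assert (0 < df p * df p) by (apply Rlt_0_sqr; intros E; rewrite E in *; lra).
  nra.
Qed.

Lemma derive_eq_diff_const (f g d : R -> R) :
  (forall x, is_derive f x (d x)) -> (forall x, is_derive g x (d x)) ->
  forall a b, f a - g a = f b - g b.
Proof.
  intros Hf Hg.
  assert (H : forall a b, a < b -> f a - g a = f b - g b).
  { intros a b Hab.
    destruct (MVT_cor2 (fun x => f x - g x) (fun _ => 0) a b Hab) as (c & Ec & _); [|lra].
    intros x _; apply is_derive_Reals.
    replace 0 with (d x - d x) by ring; apply (is_derive_minus f g); auto. }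
  intros a b; destruct (Rtotal_order a b) as [Hab | [-> | Hab]]; auto.
  symmetry; auto.
Qed.

Lemma shift_by_Z (f : R -> R) (T D : R) :
  (forall t, f (t + T) = f t + D) -> forall (k : Z) t, f (t + IZR k * T) = f t + IZR k * D.
Proof.
  intros Hf.
  assert (Hnat : forall n t, f (t + INR n * T) = f t + INR n * D).
  { induction n as [|n IH]; intros t.
    - rewrite INR_0, !Rmult_0_l, !Rplus_0_r; reflexivity.
    - rewrite S_INR, Rmult_plus_distr_r, Rmult_1_l, <- Rplus_assoc, Hf, IH; ring. }
  intros [|p|p] t.
  - rewrite !Rmult_0_l, !Rplus_0_r; reflexivity.
  - rewrite <- positive_nat_Z, <- INR_IZR_INZ; apply Hnat.
  - rewrite <- Pos2Z.opp_pos, opp_IZR, <- positive_nat_Z, <- INR_IZR_INZ.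
    specialize (Hnat (Pos.to_nat p) (t + - INR (Pos.to_nat p) * T)).
    replace (t + - INR (Pos.to_nat p) * T + INR (Pos.to_nat p) * T) with t in Hnat by ring.
    lra.
Qed.

Lemma continuous_of_increasing_surjective (f : R -> R) :
  (forall a b, a < b -> f a < f b) -> (forall s, exists t, f t = s) ->
  forall x, continuous f x.
Proof.
  intros Hi Hs x; apply continuity_pt_filterlim; intros eps Heps.
  destruct (Hs (f x - eps)) as [t1 E1], (Hs (f x + eps)) as [t2 E2].
  assert (T1 : t1 < x).
  { destruct (Rlt_le_dec t1 x) as [|H]; [assumption|].
    destruct (Req_dec t1 x); [subst; lra | specialize (Hi x t1); lra]. }
  assert (T2 : x < t2).
  { destruct (Rlt_le_dec x t2) as [|H]; [assumption|].
    destruct (Req_dec t2 x); [subst; lra | specialize (Hi t2 x); lra]. }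
  exists (Rmin (x - t1) (t2 - x)); split; [apply Rmin_glb_lt; lra|].
  intros y [_ Hy]; simpl in Hy |- *; unfold R_dist in *.
  pose proof (Rmin_l (x - t1) (t2 - x)); pose proof (Rmin_r (x - t1) (t2 - x)).
  apply Rabs_def2 in Hy.
  assert (f t1 < f y) by (apply Hi; lra); assert (f y < f t2) by (apply Hi; lra).
  apply Rabs_def1; lra.
Qed.

Lemma Int_part_unique x (z : Z) : IZR z <= x < IZR z + 1 -> Int_part x = z.
Proof.
  intros [H1 H2]; unfold Int_part.
  assert (E : (z + 1)%Z = up x) by (apply tech_up; rewrite plus_IZR; simpl; lra).
  lia.
Qed.

Lemma floorR_bounds x : floorR x <= x < floorR x + 1.
Proof. unfold floorR; destruct (base_Int_part x); lra. Qed.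

Lemma floorR_unique x (z : Z) : IZR z <= x < IZR z + 1 -> floorR x = IZR z.
Proof. intros H; unfold floorR; rewrite (Int_part_unique x z H); reflexivity. Qed.

Lemma floorR_div_bounds x T : 0 < T -> floorR (x / T) * T <= x < (floorR (x / T) + 1) * T.
Proof.
  intros HT; pose proof (floorR_bounds (x / T)).
  assert (Hx : x / T * T = x) by (field; lra).
  set (y := x / T) in *; rewrite <- Hx.
  split; [apply Rmult_le_compat_r | apply Rmult_lt_compat_r]; lra.
Qed.

Lemma floorR_div_unique x T (z : Z) : 0 < T -> IZR z * T <= x < (IZR z + 1) * T -> floorR (x / T) = IZR z.
Proof.
  intros HT Hx; apply floorR_unique.
  split; [apply Rmult_le_reg_r with T | apply Rmult_lt_reg_r with T];
    try lra; replace (x / T * T) with x by (field; lra); lra.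
Qed.

Definition rel_pos (g : R -> R) (a b x : R) : R := (g x - g a) / (g b - g a).

Section RelativePosition.

Variables (g : R -> R) (a b : R).
Hypothesis Hab : a < b.
Hypothesis Hmono : forall x y, a <= x -> x < y -> y <= b -> 0 < (g y - g x) * (g b - g a).

Let gap_neq0 : g b - g a <> 0.
Proof. intros E; specialize (Hmono a b (Rle_refl a) Hab (Rle_refl b)); rewrite E in Hmono; lra. Qed.

Lemma rel_pos_lt x y : a <= x -> x < y -> y <= b -> rel_pos g a b x < rel_pos g a b y.
Proof.
  intros Hx Hxy Hy; specialize (Hmono x y Hx Hxy Hy); unfold rel_pos.
  apply Rlt_0_minus.
  replace ((g y - g a) / (g b - g a) - (g x - g a) / (g b - g a))
    with ((g y - g x) * (g b - g a) / ((g b - g a) * (g b - g a))) by (field; exact gap_neq0).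
  apply Rdiv_lt_0_compat; [exact Hmono | apply Rlt_0_sqr, gap_neq0].
Qed.

Lemma rel_pos_range x : a <= x < b -> 0 <= rel_pos g a b x < 1.
Proof.
  intros [Hx Hxb].
  assert (E0 : rel_pos g a b a = 0) by (unfold rel_pos; rewrite Rminus_diag; apply Rdiv_0_l).
  assert (E1 : rel_pos g a b b = 1) by (unfold rel_pos; apply Rdiv_diag, gap_neq0).
  rewrite <- E0, <- E1; split.
  - destruct (Req_dec a x) as [<-|]; [lra|]. left; apply rel_pos_lt; lra.
  - apply rel_pos_lt; lra.
Qed.

Lemma rel_pos_affine x : g a + rel_pos g a b x * (g b - g a) = g x.
Proof. unfold rel_pos; field; exact gap_neq0. Qed.

Lemma rel_pos_surj r : (forall x, continuous g x) -> 0 <= r < 1 ->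
  exists x, a <= x < b /\ rel_pos g a b x = r.
Proof.
  intros Hg Hr.
  destruct (IVT_prod g a b (g a + r * (g b - g a)) Hg) as (x & Hx & Ex); [lra | |].
  { replace ((g a - (g a + r * (g b - g a))) * (g b - (g a + r * (g b - g a))))
      with (- (r * (1 - r)) * ((g b - g a) * (g b - g a))) by ring.
    pose proof (Rlt_0_sqr _ gap_neq0); unfold Rsqr in *.
    assert (0 <= r * (1 - r)) by nra; nra. }
  assert (Er : rel_pos g a b x = r) by (unfold rel_pos; rewrite Ex; field; exact gap_neq0).
  exists x; split; [split; [lra|] | exact Er].
  destruct (Req_dec x b) as [->|]; [|lra].
  unfold rel_pos in Er; rewrite Rdiv_diag in Er by exact gap_neq0; lra.
Qed.

End RelativePosition.

(* By the IVT, [G] maps right neighbourhoods of [u0] onto right neighbourhoods of [G u0];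
   no inverse of [G] is needed. *)
Lemma at_right_reparam (G : R -> R) (u0 u1 : R) (Q : R -> Prop) :
  u0 < u1 -> (forall s, continuous G s) -> (forall s, u0 < s <= u1 -> G u0 < G s) ->
  at_right u0 Q -> at_right (G u0) (fun x => exists s, u0 < s < u1 /\ Q s /\ G s = x).
Proof.
  intros Hu HG Hinc [eps HQ].
  set (s1 := u0 + Rmin eps (u1 - u0) / 2).
  assert (Hs1 : u0 < s1 < u1 /\ s1 - u0 < eps).
  { pose proof (Rmin_l eps (u1 - u0)); pose proof (Rmin_r eps (u1 - u0)).
    assert (0 < Rmin eps (u1 - u0)) by (apply Rmin_glb_lt; [apply cond_pos | lra]).
    unfold s1; lra. }
  assert (HGs1 : G u0 < G s1) by (apply Hinc; lra).
  exists (mkposreal _ (proj2 (Rlt_0_minus _ _) HGs1)); intros x Hx Hgt.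
  change (Rabs (x - G u0) < G s1 - G u0) in Hx; apply Rabs_def2 in Hx.
  destruct (IVT_prod G u0 s1 x HG) as (s & Hs & Es); [lra | nra |].
  assert (Hs0 : s <> u0) by (intros ->; lra).
  exists s; split; [lra | split; [|exact Es]].
  apply HQ; [change (Rabs (s - u0) < eps); apply Rabs_def1; lra | lra].
Qed.

Lemma at_left_reparam (G : R -> R) (u0 u1 : R) (Q : R -> Prop) :
  u1 < u0 -> (forall s, continuous G s) -> (forall s, u1 <= s < u0 -> G s < G u0) ->
  at_left u0 Q -> at_left (G u0) (fun x => exists s, u1 < s < u0 /\ Q s /\ G s = x).
Proof.
  intros Hu HG Hinc [eps HQ].
  set (s1 := u0 - Rmin eps (u0 - u1) / 2).
  assert (Hs1 : u1 < s1 < u0 /\ u0 - s1 < eps).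
  { pose proof (Rmin_l eps (u0 - u1)); pose proof (Rmin_r eps (u0 - u1)).
    assert (0 < Rmin eps (u0 - u1)) by (apply Rmin_glb_lt; [apply cond_pos | lra]).
    unfold s1; lra. }
  assert (HGs1 : G s1 < G u0) by (apply Hinc; lra).
  exists (mkposreal _ (proj2 (Rlt_0_minus _ _) HGs1)); intros x Hx Hlt.
  change (Rabs (x - G u0) < G u0 - G s1) in Hx; apply Rabs_def2 in Hx.
  destruct (IVT_prod G s1 u0 x HG) as (s & Hs & Es); [lra | nra |].
  assert (Hs0 : s <> u0) by (intros ->; lra).
  exists s; split; [lra | split; [|exact Es]].
  apply HQ; [change (Rabs (s - u0) < eps); apply Rabs_def1; lra | lra].
Qed.

Lemma at_right_of_locally (x : R) (P : R -> Prop) : locally x P -> at_right x P.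
Proof. intros [eps H]; exists eps; intros y Hy _; apply H, Hy. Qed.

Lemma at_left_of_locally (x : R) (P : R -> Prop) : locally x P -> at_left x P.
Proof. intros [eps H]; exists eps; intros y Hy _; apply H, Hy. Qed.

Lemma is_RInt_gen_at_right_reparam (f G H : R -> R) (u0 u1 b : R) :
  u0 < u1 -> (forall s, continuous G s) -> (forall s, u0 < s <= u1 -> G u0 < G s) ->
  continuous H u0 -> (forall s, u0 < s < u1 -> is_RInt f (G s) b (H s)) ->
  is_RInt_gen f (at_right (G u0)) (at_point b) (H u0).
Proof.
  intros Hu HG Hinc HH Hint P HP.
  apply (Filter_prod _ _ _ (fun x => exists s, u0 < s < u1 /\ P (H s) /\ G s = x) (fun y => y = b)).
  - apply (at_right_reparam G u0 u1 (fun s => P (H s))); auto.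
    apply at_right_of_locally, HH, HP.
  - reflexivity.
  - intros x y (s & Hs & HPs & <-) ->; exists (H s); split; [apply Hint, Hs | exact HPs].
Qed.

Lemma is_RInt_gen_at_left_reparam (f G H : R -> R) (u0 u1 a : R) :
  u1 < u0 -> (forall s, continuous G s) -> (forall s, u1 <= s < u0 -> G s < G u0) ->
  continuous H u0 -> (forall s, u1 < s < u0 -> is_RInt f a (G s) (H s)) ->
  is_RInt_gen f (at_point a) (at_left (G u0)) (H u0).
Proof.
  intros Hu HG Hinc HH Hint P HP.
  apply (Filter_prod _ _ _ (fun x => x = a) (fun y => exists s, u1 < s < u0 /\ P (H s) /\ G s = y)).
  - reflexivity.
  - apply (at_left_reparam G u0 u1 (fun s => P (H s))); auto.
    apply at_left_of_locally, HH, HP.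
  - intros x y -> (s & Hs & HPs & <-); exists (H s); split; [apply Hint, Hs | exact HPs].
Qed.

Lemma is_RInt_change_var (f g dg : R -> R) (a b L : R) :
  (forall x, continuous g x) ->
  (forall x, Rmin a b <= x <= Rmax a b -> continuous f (g x)) ->
  (forall x, Rmin a b <= x <= Rmax a b -> is_derive g x (dg x) /\ continuous dg x) ->
  is_RInt (fun y => dg y * f (g y)) a b L -> is_RInt f (g a) (g b) L.
Proof.
  intros Hg Hf Hdg HL.
  assert (Hex : ex_RInt f (g a) (g b)).
  { apply (ex_RInt_continuous (V := R_CompleteNormedModule)); intros z Hz.
    assert (Hprod : (g (Rmin a b) - z) * (g (Rmax a b) - z) <= 0).
    { unfold Rmin, Rmax in *; destruct (Rle_dec a b), (Rle_dec (g a) (g b)); nra. }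
    destruct (IVT_prod g (Rmin a b) (Rmax a b) z Hg (Rmin_Rmax a b) Hprod) as (x & Hx & <-).
    apply Hf, Hx. }
  replace L with (RInt f (g a) (g b)).
  - apply (RInt_correct (V := R_CompleteNormedModule)), Hex.
  - rewrite <- (RInt_comp f g dg a b Hf Hdg); apply (is_RInt_unique (V := R_CompleteNormedModule)), HL.
Qed.

Lemma pow_div (x y : R) (k : nat) : y <> 0 -> (x / y) ^ k = x ^ k / y ^ k.
Proof. intros Hy; unfold Rdiv; rewrite Rpow_mult_distr, pow_inv; reflexivity. Qed.

(** * The unit circle of the planar norm *)

Section PlanarUnitCircle.

Variable m : nat.
Hypothesis Hm : (1 <= m)%nat.

Definition pow_sum_cs (t : R) : R := cos t ^ (2 * m) + sin t ^ (2 * m).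
Definition norm_cs (t : R) : R := Rpower (pow_sum_cs t) (/ INR (2 * m)).

Definition eta_r (t : R) : R := - cos t / norm_cs t.
Definition eta_z (t : R) : R := sin t / norm_cs t.
Definition deta_r (t : R) : R := sin t ^ (2 * m - 1) / (pow_sum_cs t * norm_cs t).
Definition deta_z (t : R) : R := cos t ^ (2 * m - 1) / (pow_sum_cs t * norm_cs t).

Lemma odd_exponent : (2 * m - 1 = 2 * (m - 1) + 1)%nat.
Proof. lia. Qed.

Lemma pow_odd_neg (x : R) : x < 0 -> x ^ (2 * m - 1) < 0.
Proof.
  intros Hx; rewrite odd_exponent, pow_add, pow_mult, pow_1.
  assert (0 < (x ^ 2) ^ (m - 1)) by (apply pow_lt; nra); nra.
Qed.

Lemma pow_opp_odd (x : R) : (- x) ^ (2 * m - 1) = - x ^ (2 * m - 1).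
Proof.
  rewrite odd_exponent, !pow_add, !pow_mult, !pow_1; replace ((- x) ^ 2) with (x ^ 2) by ring; ring.
Qed.

Lemma pow_opp_even (x : R) : (- x) ^ (2 * m) = x ^ (2 * m).
Proof. rewrite !pow_mult; f_equal; ring. Qed.

Lemma pow_sum_cs_pos t : 0 < pow_sum_cs t.
Proof.
  unfold pow_sum_cs; rewrite !pow_mult.
  assert (Hc : 0 <= (cos t ^ 2) ^ m) by (apply pow_le; nra).
  assert (Hs : 0 <= (sin t ^ 2) ^ m) by (apply pow_le; nra).
  destruct (cos_sin_0_var t) as [H|H]; apply Rsqr_pos_lt in H; rewrite Rsqr_pow2 in H.
  - assert (0 < (cos t ^ 2) ^ m) by (apply pow_lt, H); lra.
  - assert (0 < (sin t ^ 2) ^ m) by (apply pow_lt, H); lra.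
Qed.

Lemma norm_cs_pos t : 0 < norm_cs t.
Proof. apply exp_pos. Qed.

Lemma norm_cs_pow t : norm_cs t ^ (2 * m) = pow_sum_cs t.
Proof.
  unfold norm_cs; rewrite <- Rpower_pow by apply exp_pos.
  rewrite Rpower_mult, Rinv_l, Rpower_1; [reflexivity | apply pow_sum_cs_pos |].
  apply not_0_INR; lia.
Qed.

Lemma norm_cs_of_pow_sum_1 t : pow_sum_cs t = 1 -> norm_cs t = 1.
Proof. intros H; unfold norm_cs, Rpower; rewrite H, ln_1, Rmult_0_r; apply exp_0. Qed.

Lemma eta_on_circle t : eta_r t ^ (2 * m) + eta_z t ^ (2 * m) = 1.
Proof.
  pose proof (norm_cs_pos t); pose proof (pow_sum_cs_pos t).
  unfold eta_r, eta_z; rewrite !pow_div, pow_opp_even, norm_cs_pow by lra.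
  unfold pow_sum_cs in *; field; lra.
Qed.

Lemma is_derive_eta t : is_derive eta_r t (deta_r t) /\ is_derive eta_z t (deta_z t).
Proof.
  pose proof (pow_sum_cs_pos t) as HQ; pose proof (sin2_cos2 t) as E; unfold Rsqr in E.
  unfold eta_r, eta_z, deta_r, deta_z, norm_cs, Rpower; unfold pow_sum_cs in *.
  set (k := (2 * m - 1)%nat); assert (Hk : (2 * m = S k)%nat) by (unfold k; lia).
  rewrite Hk in *; assert (0 < INR (S k)) by (apply lt_0_INR; lia).
  split; [ replace (sin t ^ k) with (sin t ^ k * (sin t * sin t + cos t * cos t)) by (rewrite E; ring)
         | replace (cos t ^ k) with (cos t ^ k * (sin t * sin t + cos t * cos t)) by (rewrite E; ring) ];
  (auto_derive; [repeat split; auto; apply Rgt_not_eq, exp_pos |]);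
  change (pred (S k)) with k; set (X := exp _); assert (0 < X) by apply exp_pos;
  rewrite <- !tech_pow_Rmult in *; field; repeat split; apply Rgt_not_eq; assumption.
Qed.

Lemma is_derive_eta_r t : is_derive eta_r t (deta_r t).
Proof. apply is_derive_eta. Qed.

Lemma is_derive_eta_z t : is_derive eta_z t (deta_z t).
Proof. apply is_derive_eta. Qed.

Lemma is_C2_pow_sum_cs : is_C2 pow_sum_cs.
Proof. apply is_C2_plus; apply is_C2_pow; [apply is_C2_cos | apply is_C2_sin]; apply is_C2_id. Qed.

Lemma is_C2_norm_cs : is_C2 norm_cs.
Proof.
  apply is_C2_exp, is_C2_mult; [apply is_C2_const|].
  apply is_C2_ln; [apply is_C2_pow_sum_cs | apply pow_sum_cs_pos].
Qed.

Lemma is_C2_div_trig f : is_C2 f -> is_C2 (fun t => f t / (pow_sum_cs t * norm_cs t)).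
Proof.
  intros Hf; apply is_C2_mult; [exact Hf|].
  apply is_C2_inv; [apply is_C2_mult; [apply is_C2_pow_sum_cs | apply is_C2_norm_cs]|].
  intros t; apply Rmult_lt_0_compat; [apply pow_sum_cs_pos | apply norm_cs_pos].
Qed.

Lemma is_C2_eta_r : is_C2 eta_r.
Proof.
  apply is_C2_mult; [apply is_C2_opp, is_C2_cos, is_C2_id|].
  apply is_C2_inv; [apply is_C2_norm_cs | apply norm_cs_pos].
Qed.

Lemma is_C2_deta_r : is_C2 deta_r.
Proof. apply is_C2_div_trig, is_C2_pow, is_C2_sin, is_C2_id. Qed.

Lemma is_C2_deta_z : is_C2 deta_z.
Proof. apply is_C2_div_trig, is_C2_pow, is_C2_cos, is_C2_id. Qed.

Lemma trig_denominator_pos t : 0 < pow_sum_cs t * norm_cs t.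
Proof. apply Rmult_lt_0_compat; [apply pow_sum_cs_pos | apply norm_cs_pos]. Qed.

Lemma deta_r_neq0 t : sin t <> 0 -> deta_r t <> 0.
Proof.
  intros Hs; pose proof (trig_denominator_pos t).
  unfold deta_r, Rdiv; apply Rmult_integral_contrapositive_currified;
    [apply pow_nonzero, Hs | apply Rinv_neq_0_compat; lra].
Qed.

Lemma deta_z_pos t : 0 < cos t -> 0 < deta_z t.
Proof.
  intros Hc; apply Rdiv_lt_0_compat; [apply pow_lt, Hc | apply trig_denominator_pos].
Qed.

Lemma deta_z_neg t : cos t < 0 -> deta_z t < 0.
Proof.
  intros Hc; pose proof (trig_denominator_pos t); pose proof (pow_odd_neg _ Hc).
  unfold deta_z, Rdiv; assert (0 < / (pow_sum_cs t * norm_cs t)) by (apply Rinv_0_lt_compat; lra).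
  nra.
Qed.

Lemma deta_neq0 t : deta_r t <> 0 \/ deta_z t <> 0.
Proof.
  destruct (cos_sin_0_var t) as [Hc|Hs]; [right | left; apply deta_r_neq0, Hs].
  pose proof (trig_denominator_pos t).
  unfold deta_z, Rdiv; apply Rmult_integral_contrapositive_currified;
    [apply pow_nonzero, Hc | apply Rinv_neq_0_compat; lra].
Qed.

Lemma eta_r_of_pow_sum_1 t : pow_sum_cs t = 1 -> eta_r t = - cos t.
Proof. intros H; unfold eta_r; rewrite norm_cs_of_pow_sum_1 by exact H; field. Qed.

Lemma pow_sum_cs_axis t : cos t = 0 \/ sin t = 0 -> pow_sum_cs t = 1.
Proof.
  pose proof (sin2_cos2 t) as E; unfold Rsqr in E; unfold pow_sum_cs; rewrite !pow_mult.
  intros [H|H].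
  - replace (cos t ^ 2) with 0 by (rewrite H; ring); replace (sin t ^ 2) with 1 by (rewrite H in E; lra).
    rewrite pow_i, pow1 by lia; ring.
  - replace (sin t ^ 2) with 0 by (rewrite H; ring); replace (cos t ^ 2) with 1 by (rewrite H in E; lra).
    rewrite pow_i, pow1 by lia; ring.
Qed.

Lemma eta_r_0 : eta_r 0 = -1.
Proof. rewrite eta_r_of_pow_sum_1, cos_0; [reflexivity | apply pow_sum_cs_axis; right; apply sin_0]. Qed.

Lemma eta_r_PI2 : eta_r (PI / 2) = 0.
Proof. rewrite eta_r_of_pow_sum_1, cos_PI2; [lra | apply pow_sum_cs_axis; left; apply cos_PI2]. Qed.

Lemma eta_r_PI : eta_r PI = 1.
Proof. rewrite eta_r_of_pow_sum_1, cos_PI; [lra | apply pow_sum_cs_axis; right; apply sin_PI]. Qed.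

Lemma pow_sum_cs_eq a b : cos a = cos b -> sin a ^ 2 = sin b ^ 2 -> pow_sum_cs a = pow_sum_cs b.
Proof. intros Hc Hs; unfold pow_sum_cs; rewrite !pow_mult, Hc, Hs; reflexivity. Qed.

Lemma Rpower_pow_odd_ratio z : 0 < z ->
  Rpower (z ^ (2 * m)) (INR (2 * m - 1) / INR (2 * m)) = z ^ (2 * m - 1).
Proof.
  intros Hz; assert (0 < INR (2 * m)) by (apply lt_0_INR; lia).
  unfold Rpower at 1; rewrite ln_pow by exact Hz.
  replace (INR (2 * m - 1) / INR (2 * m) * (INR (2 * m) * ln z)) with (INR (2 * m - 1) * ln z)
    by (field; lra).
  apply Rpower_pow, Hz.
Qed.

End PlanarUnitCircle.

(** * The profile curve *)

Section Profile.

Variables (m : nat) (c1 : R).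
Hypothesis Hm : (1 <= m)%nat.
Hypothesis Hc : 0 < c1.

Definition disc (t : R) : R := sqrt (eta_r m t ^ 2 + 4 * c1).

(* Mean curvature 1 amounts to the first integral [alpha^2 - eta_r alpha = c1];
   alpha is its positive root. *)
Definition alpha (t : R) : R := (eta_r m t + disc t) / 2.

(* [(alpha', beta')] is a positive multiple of [(eta_r', eta_z')]: this makes [eta] normal
   to the surface. *)
Definition dalpha (t : R) : R := deta_r m t * (alpha t / disc t).
Definition dbeta (t : R) : R := deta_z m t * (alpha t / disc t).
Definition beta (t : R) : R := RInt dbeta (PI / 2) t.

Lemma disc_pos t : 0 < disc t.
Proof. apply sqrt_lt_R0; nra. Qed.

Lemma disc_sqr t : disc t * disc t = eta_r m t ^ 2 + 4 * c1.
Proof. apply sqrt_sqrt; nra. Qed.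

Lemma alpha_pos t : 0 < alpha t.
Proof.
  pose proof (disc_pos t); pose proof (disc_sqr t).
  assert (eta_r m t < disc t) by nra; assert (- eta_r m t < disc t) by nra.
  unfold alpha; lra.
Qed.

Lemma alpha_quadratic t : alpha t ^ 2 - eta_r m t * alpha t = c1.
Proof. pose proof (disc_sqr t); unfold alpha; nra. Qed.

Lemma is_derive_alpha t : is_derive alpha t (dalpha t).
Proof.
  pose proof (is_derive_eta_r m Hm t) as Hr; pose proof (disc_pos t) as Hd.
  unfold alpha, dalpha, disc in *; auto_derive.
  - repeat split; try (exists (deta_r m t); exact Hr); nra.
  - replace (Derive (fun x => eta_r m x) t) with (deta_r m t) by (symmetry; apply is_derive_unique, Hr).
    replace (eta_r m t * (eta_r m t * 1)) with (eta_r m t ^ 2) by ring; unfold alpha, disc; field; lra.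
Qed.

Lemma is_C2_disc : is_C2 disc.
Proof.
  apply is_C2_sqrt; [|intros; nra].
  apply is_C2_plus; [apply is_C2_pow, is_C2_eta_r | apply is_C2_const].
Qed.

Lemma is_C2_alpha : is_C2 alpha.
Proof.
  apply is_C2_mult; [apply is_C2_plus; [apply is_C2_eta_r | apply is_C2_disc] | apply is_C2_const].
Qed.

Lemma is_C2_alpha_div_disc : is_C2 (fun t => alpha t / disc t).
Proof. apply is_C2_mult; [apply is_C2_alpha | apply is_C2_inv; [apply is_C2_disc | apply disc_pos]]. Qed.

Lemma is_C2_dalpha : is_C2 dalpha.
Proof.
  apply (is_C2_mult (deta_r m) (fun t => alpha t / disc t));
    [apply is_C2_deta_r | apply is_C2_alpha_div_disc].
Qed.

Lemma is_C2_dbeta : is_C2 dbeta.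
Proof.
  apply (is_C2_mult (deta_z m) (fun t => alpha t / disc t));
    [apply is_C2_deta_z | apply is_C2_alpha_div_disc].
Qed.

Lemma is_derive_beta t : is_derive beta t (dbeta t).
Proof.
  apply (is_derive_RInt dbeta beta (PI / 2)); [|apply is_C2_continuous, is_C2_dbeta].
  apply filter_forall; intros y; apply (RInt_correct (V := R_CompleteNormedModule)).
  apply ex_RInt_continuous; intros; apply is_C2_continuous, is_C2_dbeta.
Qed.

Lemma is_C2_beta : is_C2 beta.
Proof.
  destruct is_C2_dbeta as [f1 [f2 H]].
  exists dbeta, f1; intros x; destruct (H x) as (H1 & H2 & _).
  split; [apply is_derive_beta | split; [exact H1 | apply (is_derive_continuous _ _ _ H2)]].
Qed.

Lemma alpha_div_disc_pos t : 0 < alpha t / disc t.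
Proof. apply Rdiv_lt_0_compat; [apply alpha_pos | apply disc_pos]. Qed.

Lemma dalpha_neq0 t : sin t <> 0 -> dalpha t <> 0.
Proof.
  intros Hs; pose proof (alpha_div_disc_pos t); pose proof (deta_r_neq0 m t Hs).
  unfold dalpha; apply Rmult_integral_contrapositive_currified; [assumption | lra].
Qed.

Lemma dbeta_pos t : 0 < cos t -> 0 < dbeta t.
Proof.
  intros Hcos; pose proof (alpha_div_disc_pos t); pose proof (deta_z_pos m t Hcos).
  unfold dbeta; apply Rmult_lt_0_compat; assumption.
Qed.

Lemma dbeta_neg t : cos t < 0 -> dbeta t < 0.
Proof.
  intros Hcos; pose proof (alpha_div_disc_pos t); pose proof (deta_z_neg m Hm t Hcos).
  unfold dbeta; nra.
Qed.

Lemma profile_regular t : Derive alpha t <> 0 \/ Derive beta t <> 0.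
Proof.
  rewrite (is_derive_unique _ _ _ (is_derive_alpha t)), (is_derive_unique _ _ _ (is_derive_beta t)).
  pose proof (alpha_div_disc_pos t) as Hr.
  unfold dalpha, dbeta.
  destruct (deta_neq0 m t) as [H|H]; [left | right];
    apply Rmult_integral_contrapositive_currified; [assumption | lra | assumption | lra].
Qed.

Lemma alpha_of_eta_r t r : eta_r m t = r -> alpha t = (r + sqrt (r ^ 2 + 4 * c1)) / 2.
Proof. intros E; unfold alpha, disc; rewrite E; reflexivity. Qed.

Lemma alpha_0 : alpha 0 = b1 c1.
Proof.
  rewrite (alpha_of_eta_r 0 (-1)) by (apply eta_r_0, Hm); unfold b1.
  replace ((-1) ^ 2 + 4 * c1) with (1 + 4 * c1) by ring; lra.
Qed.

Lemma alpha_PI : alpha PI = b4 c1.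
Proof.
  rewrite (alpha_of_eta_r PI 1) by (apply eta_r_PI, Hm); unfold b4.
  replace (1 ^ 2 + 4 * c1) with (1 + 4 * c1) by ring; lra.
Qed.

Lemma alpha_PI2 : alpha (PI / 2) = sqrt c1.
Proof.
  rewrite (alpha_of_eta_r (PI / 2) 0) by (apply eta_r_PI2, Hm).
  replace (0 ^ 2 + 4 * c1) with (2 ^ 2 * c1) by ring.
  rewrite sqrt_mult, sqrt_pow2; lra.
Qed.

Lemma sin_neq0_quarter (j : Z) t : IZR j * (PI / 2) < t < (IZR j + 1) * (PI / 2) -> sin t <> 0.
Proof.
  intros Ht Hs; destruct (sin_eq_0_0 t Hs) as [k ->].
  pose proof PI_RGT_0.
  assert (Hk : IZR j < IZR (2 * k) < IZR j + 1) by (rewrite mult_IZR; split; nra).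
  rewrite <- plus_IZR in Hk; destruct Hk as [H1 H2]; apply lt_IZR in H1, H2; lia.
Qed.

Lemma alpha_quarter_mono (j : Z) x y :
  IZR j * (PI / 2) <= x -> x < y -> y <= (IZR j + 1) * (PI / 2) ->
  0 < (alpha y - alpha x) * (alpha ((IZR j + 1) * (PI / 2)) - alpha (IZR j * (PI / 2))).
Proof.
  apply (derive_sign_mono alpha dalpha); [apply is_derive_alpha | |].
  - intros; apply is_C2_continuous, is_C2_dalpha.
  - intros z Hz; apply dalpha_neq0, (sin_neq0_quarter j), Hz.
Qed.

Lemma alpha_lt x y : 0 <= x -> x < y -> y <= PI -> alpha x < alpha y.
Proof.
  intros Hx Hxy Hy; pose proof PI_RGT_0.
  assert (Hd : 0 < dalpha (PI / 2)).
  { apply Rmult_lt_0_compat; [|apply alpha_div_disc_pos].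
    unfold deta_r; rewrite sin_PI2, pow1; apply Rdiv_lt_0_compat; [lra | apply trig_denominator_pos]. }
  assert (0 < (alpha y - alpha x) * dalpha (PI / 2)); [|nra].
  apply (derive_sign_lt alpha dalpha 0 PI); try assumption || lra.
  - apply is_derive_alpha.
  - intros; apply is_C2_continuous, is_C2_dalpha.
  - intros z Hz; apply dalpha_neq0; apply Rgt_not_eq, sin_gt_0; lra.
Qed.

Lemma profile_cs_eq a b : cos a = cos b -> sin a ^ 2 = sin b ^ 2 ->
  alpha a = alpha b /\ dbeta a = dbeta b.
Proof.
  intros Hcos Hsin; pose proof (pow_sum_cs_eq m a b Hcos Hsin) as HQ.
  assert (HN : norm_cs m a = norm_cs m b) by (unfold norm_cs; rewrite HQ; reflexivity).
  assert (Hr : eta_r m a = eta_r m b) by (unfold eta_r; rewrite HN, Hcos; reflexivity).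
  assert (HD : disc a = disc b) by (unfold disc; rewrite Hr; reflexivity).
  assert (HA : alpha a = alpha b) by (unfold alpha; rewrite Hr, HD; reflexivity).
  split; [exact HA|]; unfold dbeta, deta_z; rewrite Hcos, HQ, HN, HA, HD; reflexivity.
Qed.

Lemma profile_periodic t : alpha (t + 2 * PI) = alpha t /\ dbeta (t + 2 * PI) = dbeta t.
Proof. apply profile_cs_eq; rewrite ?cos_plus, ?sin_plus, cos_2PI, sin_2PI; ring. Qed.

Lemma profile_reflect t : alpha (2 * PI - t) = alpha t /\ dbeta (2 * PI - t) = dbeta t.
Proof. apply profile_cs_eq; rewrite ?cos_minus, ?sin_minus, cos_2PI, sin_2PI; ring. Qed.

Lemma alpha_3PI2 : alpha (3 * PI / 2) = sqrt c1.
Proof.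
  replace (3 * PI / 2) with (2 * PI - PI / 2) by field.
  rewrite (proj1 (profile_reflect _)); apply alpha_PI2.
Qed.

Lemma alpha_2PI : alpha (2 * PI) = b1 c1.
Proof. rewrite <- (Rplus_0_l (2 * PI)), (proj1 (profile_periodic 0)); apply alpha_0. Qed.

Lemma beta_PI2 : beta (PI / 2) = 0.
Proof. apply (RInt_point (V := R_CompleteNormedModule)). Qed.

Lemma beta_shift t : beta (t + 2 * PI) = beta t + (beta (2 * PI) - beta 0).
Proof.
  assert (Hd : forall x, is_derive (fun x => beta (x + 2 * PI)) x (dbeta x)).
  { intros x; replace (dbeta x) with (dbeta (x + 2 * PI) * 1) by (rewrite (proj2 (profile_periodic x)); ring).
    apply (is_derive_Rcomp beta (fun x => x + 2 * PI)); [auto_derive; auto; ring | apply is_derive_beta]. }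
  pose proof (derive_eq_diff_const _ _ _ Hd is_derive_beta t 0) as H; cbv beta in H.
  rewrite Rplus_0_l in H; lra.
Qed.

Lemma beta_reflect t : beta (2 * PI - t) = 2 * beta PI - beta t.
Proof.
  assert (Hd : forall x, is_derive (fun x => - beta (2 * PI - x)) x (dbeta x)).
  { intros x; replace (dbeta x) with (- (dbeta (2 * PI - x) * (-1)))
      by (rewrite (proj2 (profile_reflect x)); ring).
    apply is_derive_Ropp, (is_derive_Rcomp beta (fun x => 2 * PI - x));
      [auto_derive; auto; ring | apply is_derive_beta]. }
  pose proof (derive_eq_diff_const _ _ _ Hd is_derive_beta t PI) as H; cbv beta in H.
  replace (2 * PI - PI) with PI in H by ring; lra.
Qed.

Lemma beta_0_neg : beta 0 < 0.
Proof.
  pose proof PI_RGT_0; pose proof beta_PI2.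
  assert (Hd : 0 < dbeta (PI / 4)) by (apply dbeta_pos, cos_gt_0; lra).
  assert (0 < (beta (PI / 2) - beta 0) * dbeta (PI / 4)); [|nra].
  apply (derive_sign_lt beta dbeta 0 (PI / 2)); try lra.
  - apply is_derive_beta.
  - intros; apply is_C2_continuous, is_C2_dbeta.
  - intros z Hz; apply Rgt_not_eq, dbeta_pos, cos_gt_0; lra.
Qed.

Lemma beta_PI_neg : beta PI < 0.
Proof.
  pose proof PI_RGT_0; pose proof beta_PI2.
  assert (Hd : dbeta (3 * PI / 4) < 0) by (apply dbeta_neg, cos_lt_0; lra).
  assert (0 < (beta PI - beta (PI / 2)) * dbeta (3 * PI / 4)); [|nra].
  apply (derive_sign_lt beta dbeta (PI / 2) PI); try lra.
  - apply is_derive_beta.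
  - intros; apply is_C2_continuous, is_C2_dbeta.
  - intros z Hz; apply Rlt_not_eq, dbeta_neg, cos_lt_0; lra.
Qed.

Lemma profile_shift_Z (k : Z) t :
  alpha (t + IZR k * (2 * PI)) = alpha t /\
  beta (t + IZR k * (2 * PI)) = beta t + IZR k * (beta (2 * PI) - beta 0).
Proof.
  split.
  - rewrite (shift_by_Z alpha (2 * PI) 0), Rmult_0_r, Rplus_0_r; [reflexivity|].
    intros; rewrite Rplus_0_r; apply profile_periodic.
  - apply shift_by_Z, beta_shift.
Qed.

(** * The integrals F1 and F2 along the profile *)

Lemma c1_minus_alpha_sqr t : c1 - alpha t ^ 2 = cos t * alpha t / norm_cs m t.
Proof.
  rewrite <- (alpha_quadratic t); pose proof (norm_cs_pos m t).
  unfold eta_r; field; lra.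
Qed.

Lemma integrand_den_alpha t :
  alpha t ^ (2 * m) - (c1 - alpha t ^ 2) ^ (2 * m) = (alpha t * eta_z m t) ^ (2 * m).
Proof.
  replace (c1 - alpha t ^ 2) with (- (eta_r m t * alpha t)) by (rewrite <- (alpha_quadratic t); ring).
  rewrite pow_opp_even, !Rpow_mult_distr.
  replace (eta_z m t ^ (2 * m)) with (1 - eta_r m t ^ (2 * m)) by (rewrite <- (eta_on_circle m Hm t); ring).
  ring.
Qed.

Lemma integrand_den_alpha_pos t : 0 < sin t ->
  0 < alpha t ^ (2 * m) - (c1 - alpha t ^ 2) ^ (2 * m).
Proof.
  intros Hs; rewrite integrand_den_alpha; apply pow_lt, Rmult_lt_0_compat; [apply alpha_pos|].
  apply Rdiv_lt_0_compat; [exact Hs | apply norm_cs_pos].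
Qed.

Lemma integrand1_alpha t : 0 < sin t ->
  integrand1 m c1 (alpha t) = cos t ^ (2 * m - 1) / sin t ^ (2 * m - 1).
Proof.
  intros Hs; pose proof (alpha_pos t); pose proof (norm_cs_pos m t).
  unfold integrand1; rewrite integrand_den_alpha, Rpower_pow_odd_ratio, c1_minus_alpha_sqr;
    [| exact Hm | apply Rmult_lt_0_compat; [lra | apply Rdiv_lt_0_compat; lra]].
  unfold eta_z; rewrite !pow_div by lra; rewrite !Rpow_mult_distr, (pow_div (sin t)) by lra.
  assert (0 < sin t ^ (2 * m - 1)) by (apply pow_lt, Hs).
  assert (0 < alpha t ^ (2 * m - 1)) by (apply pow_lt; lra).
  assert (0 < norm_cs m t ^ (2 * m - 1)) by (apply pow_lt; lra).
  field; repeat split; lra.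
Qed.

Lemma continuous_integrand1_alpha t : 0 < sin t -> continuous (integrand1 m c1) (alpha t).
Proof.
  intros Hs; pose proof (integrand_den_alpha_pos t Hs).
  apply (@ex_derive_continuous R_AbsRing R_NormedModule).
  unfold integrand1, Rpower; auto_derive; repeat split; [exact H | apply Rgt_not_eq, exp_pos].
Qed.

Lemma dalpha_integrand1 t : 0 < sin t -> dalpha t * integrand1 m c1 (alpha t) = dbeta t.
Proof.
  intros Hs; rewrite integrand1_alpha by exact Hs.
  assert (0 < sin t ^ (2 * m - 1)) by (apply pow_lt, Hs).
  pose proof (pow_sum_cs_pos m t); pose proof (norm_cs_pos m t); pose proof (disc_pos t).
  unfold dalpha, dbeta, deta_r, deta_z; field; repeat split; lra.
Qed.

Lemma is_RInt_dbeta a b : is_RInt dbeta a b (beta b - beta a).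
Proof.
  apply (is_RInt_derive beta dbeta); intros; [apply is_derive_beta | apply is_C2_continuous, is_C2_dbeta].
Qed.

Lemma is_RInt_integrand1_alpha s : 0 < s < PI ->
  is_RInt (integrand1 m c1) (alpha s) (sqrt c1) (- beta s).
Proof.
  intros Hs; pose proof PI_RGT_0.
  assert (Hbetween : forall x, Rmin s (PI / 2) <= x <= Rmax s (PI / 2) -> 0 < sin x).
  { intros x Hx; apply sin_gt_0; unfold Rmin, Rmax in Hx; destruct Rle_dec in Hx; lra. }
  rewrite <- alpha_PI2; apply (is_RInt_change_var _ alpha dalpha).
  - intros; apply is_C2_continuous, is_C2_alpha.
  - intros x Hx; apply continuous_integrand1_alpha, Hbetween, Hx.
  - intros x _; split; [apply is_derive_alpha | apply is_C2_continuous, is_C2_dalpha].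
  - apply (is_RInt_ext dbeta).
    + intros x Hx; symmetry; apply dalpha_integrand1, Hbetween; lra.
    + replace (- beta s) with (beta (PI / 2) - beta s) by (rewrite beta_PI2; ring).
      apply is_RInt_dbeta.
Qed.

Lemma integrand2_opp rho : integrand2 m c1 rho = - integrand1 m c1 rho.
Proof.
  unfold integrand1, integrand2; replace (rho ^ 2 - c1) with (- (c1 - rho ^ 2)) by ring.
  rewrite pow_opp_odd, pow_opp_even by exact Hm; unfold Rdiv; ring.
Qed.

Lemma is_RInt_integrand2_alpha s : 0 < s < PI ->
  is_RInt (integrand2 m c1) (sqrt c1) (alpha s) (- beta s).
Proof.
  intros Hs; apply (is_RInt_ext (fun y => opp (integrand1 m c1 y))).
  - intros x _; symmetry; apply integrand2_opp.
  - rewrite <- (opp_opp (- beta s)).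
    apply (is_RInt_opp (V := R_NormedModule)), (is_RInt_swap (V := R_NormedModule)).
    apply is_RInt_integrand1_alpha, Hs.
Qed.

Lemma is_RInt_gen_integrand1 :
  is_RInt_gen (integrand1 m c1) (at_right (b1 c1)) (at_point (sqrt c1)) (- beta 0).
Proof.
  pose proof PI_RGT_0; rewrite <- alpha_0.
  apply (is_RInt_gen_at_right_reparam _ alpha (fun s => - beta s) 0 (PI / 2)).
  - lra.
  - intros; apply is_C2_continuous, is_C2_alpha.
  - intros s Hs; apply alpha_lt; lra.
  - apply continuous_Ropp, is_C2_continuous, is_C2_beta.
  - intros s Hs; apply is_RInt_integrand1_alpha; lra.
Qed.

Lemma is_RInt_gen_integrand2 :
  is_RInt_gen (integrand2 m c1) (at_point (sqrt c1)) (at_left (b4 c1)) (- beta PI).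
Proof.
  pose proof PI_RGT_0; rewrite <- alpha_PI.
  apply (is_RInt_gen_at_left_reparam _ alpha (fun s => - beta s) PI (PI / 2)).
  - lra.
  - intros; apply is_C2_continuous, is_C2_alpha.
  - intros s Hs; apply alpha_lt; lra.
  - apply continuous_Ropp, is_C2_continuous, is_C2_beta.
  - intros s Hs; apply is_RInt_integrand2_alpha; lra.
Qed.

Lemma dval1_eq : dval1 m c1 = - beta 0.
Proof.
  unfold dval1, F1; destruct Req_EM_T as [_|E]; [|congruence].
  apply (is_RInt_gen_unique (V := R_CompleteNormedModule)), is_RInt_gen_integrand1.
Qed.

Lemma dval3_eq : dval3 m c1 = - beta PI.
Proof.
  unfold dval3, F2; destruct Req_EM_T as [_|E]; [|congruence].
  apply (is_RInt_gen_unique (V := R_CompleteNormedModule)), is_RInt_gen_integrand2.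
Qed.

Lemma dval1_pos : 0 < dval1 m c1.
Proof. rewrite dval1_eq; pose proof beta_0_neg; lra. Qed.

Lemma dval3_pos : 0 < dval3 m c1.
Proof. rewrite dval3_eq; pose proof beta_PI_neg; lra. Qed.

Lemma F1_alpha t : 0 <= t <= PI / 2 -> F1 m c1 (alpha t) = - beta t.
Proof.
  intros Ht; pose proof PI_RGT_0.
  destruct (Req_dec t 0) as [->|Ht0]; [rewrite alpha_0; apply dval1_eq|].
  unfold F1; destruct Req_EM_T as [E|_].
  - rewrite <- alpha_0 in E; pose proof (alpha_lt 0 t); lra.
  - apply (is_RInt_unique (V := R_CompleteNormedModule)), is_RInt_integrand1_alpha; lra.
Qed.

Lemma F2_alpha t : PI / 2 <= t <= PI -> F2 m c1 (alpha t) = - beta t.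
Proof.
  intros Ht; pose proof PI_RGT_0.
  destruct (Req_dec t PI) as [->|HtPI]; [rewrite alpha_PI; apply dval3_eq|].
  unfold F2; destruct Req_EM_T as [E|_].
  - rewrite <- alpha_PI in E; pose proof (alpha_lt t PI); lra.
  - apply (is_RInt_unique (V := R_CompleteNormedModule)), is_RInt_integrand2_alpha; lra.
Qed.

(** * Reparametrization onto Gamma_ref *)

(* [phi] maps the quarter [[j pi/2, (j+1) pi/2]] onto [[j, j+1]], affinely in [alpha]: this is how
   [Gamma_ref] parametrizes each arc [G_i]. *)
Definition phi (t : R) : R :=
  let j := floorR (t / (PI / 2)) in j + rel_pos alpha (j * (PI / 2)) ((j + 1) * (PI / 2)) t.

Lemma quarter_bounds t :
  floorR (t / (PI / 2)) * (PI / 2) <= t < (floorR (t / (PI / 2)) + 1) * (PI / 2).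
Proof. apply floorR_div_bounds; pose proof PI_RGT_0; lra. Qed.

Lemma phi_quarter t :
  let j := floorR (t / (PI / 2)) in
  j <= phi t < j + 1 /\
  alpha (j * (PI / 2)) + (phi t - j) * (alpha ((j + 1) * (PI / 2)) - alpha (j * (PI / 2))) = alpha t.
Proof.
  intros j; pose proof PI_RGT_0; pose proof (quarter_bounds t) as Hq.
  assert (Hmono := alpha_quarter_mono (Int_part (t / (PI / 2)))).
  fold (floorR (t / (PI / 2))) in Hmono; fold j in Hq, Hmono.
  assert (Hj : j * (PI / 2) < (j + 1) * (PI / 2)) by lra.
  unfold phi; fold j; replace (j + _ - j) with (rel_pos alpha (j * (PI / 2)) ((j + 1) * (PI / 2)) t) by ring.
  split; [pose proof (rel_pos_range _ _ _ Hj Hmono t Hq); lra | apply rel_pos_affine; assumption].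
Qed.

Lemma phi_lt t1 t2 : t1 < t2 -> phi t1 < phi t2.
Proof.
  intros Ht; pose proof PI_RGT_0.
  destruct (phi_quarter t1) as [Hp1 _], (phi_quarter t2) as [Hp2 _].
  pose proof (quarter_bounds t1) as Hq1; pose proof (quarter_bounds t2) as Hq2.
  unfold floorR in *; set (j1 := Int_part (t1 / (PI / 2))) in *; set (j2 := Int_part (t2 / (PI / 2))) in *.
  assert (Hj : (j1 <= j2)%Z).
  { assert (IZR j1 < IZR j2 + 1) by nra; rewrite <- plus_IZR in H0; apply lt_IZR in H0; lia. }
  destruct (Z.eq_dec j1 j2) as [E|E].
  - unfold phi; cbv zeta; unfold floorR; fold j1 j2; rewrite E in *.
    assert (Hmono := alpha_quarter_mono j2).
    assert (Hab : IZR j2 * (PI / 2) < (IZR j2 + 1) * (PI / 2)) by lra.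
    apply Rplus_lt_compat_l, (rel_pos_lt _ _ _ Hab Hmono); lra.
  - assert (IZR j1 + 1 <= IZR j2) by (rewrite <- plus_IZR; apply IZR_le; lia); lra.
Qed.

Lemma phi_surj s : exists t, phi t = s.
Proof.
  pose proof PI_RGT_0; pose proof (floorR_bounds s) as Hs.
  unfold floorR in Hs; set (j := Int_part s) in *.
  assert (Hmono := alpha_quarter_mono j).
  assert (Hj : IZR j * (PI / 2) < (IZR j + 1) * (PI / 2)) by lra.
  destruct (rel_pos_surj _ _ _ Hj Hmono (s - IZR j)) as (t & Ht & Er);
    [intros; apply is_C2_continuous, is_C2_alpha | lra |].
  assert (Hq : floorR (t / (PI / 2)) = IZR j) by (apply floorR_div_unique; lra).
  exists t; unfold phi; cbv zeta; rewrite Hq, Er; ring.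
Qed.

Lemma continuous_phi t : continuous phi t.
Proof. apply continuous_of_increasing_surjective; [apply phi_lt | apply phi_surj]. Qed.

Lemma phi_shift (k : Z) t : phi (t + IZR k * (2 * PI)) = phi t + 4 * IZR k.
Proof.
  pose proof PI_RGT_0; pose proof (floorR_bounds (t / (PI / 2))) as Hb.
  assert (Hq : floorR ((t + IZR k * (2 * PI)) / (PI / 2)) = floorR (t / (PI / 2)) + 4 * IZR k).
  { unfold floorR in *; rewrite <- (mult_IZR 4), <- plus_IZR; apply floorR_unique.
    rewrite plus_IZR, mult_IZR.
    replace ((t + IZR k * (2 * PI)) / (PI / 2)) with (t / (PI / 2) + 4 * IZR k) by (field; lra).
    lra. }
  unfold phi; cbv zeta; rewrite Hq; set (j := floorR (t / (PI / 2))).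
  unfold rel_pos.
  replace ((j + 4 * IZR k) * (PI / 2)) with (j * (PI / 2) + IZR k * (2 * PI)) by field.
  replace ((j + 4 * IZR k + 1) * (PI / 2)) with ((j + 1) * (PI / 2) + IZR k * (2 * PI)) by field.
  rewrite !(proj1 (profile_shift_Z k _)); ring.
Qed.

Lemma Gamma_ref_shift r (k : Z) : 0 <= r < 4 ->
  Gamma_ref m c1 (r + 4 * IZR k) =
  (fst (Gamma_ref m c1 r), snd (Gamma_ref m c1 r) + IZR k * (2 * dval1 m c1 - 2 * dval3 m c1)).
Proof.
  intros Hr; unfold Gamma_ref; cbv zeta.
  rewrite (floorR_unique _ k), (floorR_unique _ 0);
    [| simpl; lra | replace ((r + 4 * IZR k) / 4) with (r / 4 + IZR k) by field; lra].
  replace (r + 4 * IZR k - 4 * IZR k) with r by ring; replace (r - 4 * 0) with r by ring.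
  destruct (Rlt_dec r 1); [|destruct (Rlt_dec r 2); [|destruct (Rlt_dec r 3)]]; simpl; f_equal; ring.
Qed.

Lemma quarter_of_period u : 0 <= u < 2 * PI ->
  let j := Int_part (u / (PI / 2)) in (j = 0 \/ j = 1 \/ j = 2 \/ j = 3)%Z.
Proof.
  intros Hu j; pose proof PI_RGT_0; pose proof (quarter_bounds u) as Hq; unfold floorR in Hq; fold j in Hq.
  assert (H1 : IZR j < 4) by (apply Rmult_lt_reg_r with (PI / 2); lra).
  assert (H2 : -1 < IZR j) by (apply Rmult_lt_reg_r with (PI / 2); lra).
  apply lt_IZR in H1, H2; lia.
Qed.

Lemma phi_range u : 0 <= u < 2 * PI -> 0 <= phi u < 4.
Proof.
  intros Hu; destruct (phi_quarter u) as [Hp _]; unfold floorR in Hp.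
  destruct (quarter_of_period u Hu) as [E|[E|[E|E]]]; rewrite E in Hp; simpl in Hp; lra.
Qed.

(* On [[0, 2 pi)] the four quarters trace [G_1], ..., [G_4]; the last two by the reflection
   [u |-> 2 pi - u]. *)
Lemma Gamma_ref_phi_0_2PI u : 0 <= u < 2 * PI -> Gamma_ref m c1 (phi u) = (alpha u, beta u).
Proof.
  intros Hu; pose proof PI_RGT_0; pose proof (phi_range u Hu) as Hr.
  destruct (phi_quarter u) as [Hp Ha]; pose proof (quarter_bounds u) as Hq.
  pose proof (quarter_of_period u Hu) as Hj; cbv zeta in Hj.
  unfold floorR in *; set (j := Int_part (u / (PI / 2))) in *.
  unfold Gamma_ref; cbv zeta; rewrite (floorR_unique _ 0) by (simpl; lra).
  replace (phi u - 4 * 0) with (phi u) by ring.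
  rewrite dval3_eq; simpl fst; simpl snd.
  destruct Hj as [E|[E|[E|E]]]; rewrite E in *; simpl IZR in *.
  - replace (0 * (PI / 2)) with 0 in Ha by ring.
    replace ((0 + 1) * (PI / 2)) with (PI / 2) in Ha by ring.
    rewrite alpha_0, alpha_PI2, Rminus_0_r in Ha.
    destruct (Rlt_dec (phi u) 1); [|lra].
    rewrite Ha, F1_alpha by lra; f_equal; ring.
  - replace (1 * (PI / 2)) with (PI / 2) in Ha by ring.
    replace ((1 + 1) * (PI / 2)) with PI in Ha by field.
    rewrite alpha_PI2, alpha_PI in Ha.
    destruct (Rlt_dec (phi u) 1); [lra|]; destruct (Rlt_dec (phi u) 2); [|lra].
    rewrite Ha, F2_alpha by lra; f_equal; ring.
  - replace (2 * (PI / 2)) with PI in Ha by field.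
    replace ((2 + 1) * (PI / 2)) with (3 * PI / 2) in Ha by field.
    rewrite alpha_PI, alpha_3PI2 in Ha.
    destruct (Rlt_dec (phi u) 1); [lra|]; destruct (Rlt_dec (phi u) 2); [lra|];
      destruct (Rlt_dec (phi u) 3); [|lra].
    replace (b4 c1 - (phi u - 2) * (b4 c1 - sqrt c1)) with (alpha u) by (rewrite <- Ha; ring).
    rewrite <- (proj1 (profile_reflect u)), F2_alpha, beta_reflect by lra; f_equal; ring.
  - replace (3 * (PI / 2)) with (3 * PI / 2) in Ha by field.
    replace ((3 + 1) * (PI / 2)) with (2 * PI) in Ha by field.
    rewrite alpha_3PI2, alpha_2PI in Ha.
    destruct (Rlt_dec (phi u) 1); [lra|]; destruct (Rlt_dec (phi u) 2); [lra|];
      destruct (Rlt_dec (phi u) 3); [lra|].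
    replace (sqrt c1 - (phi u - 3) * (sqrt c1 - b1 c1)) with (alpha u) by (rewrite <- Ha; ring).
    rewrite <- (proj1 (profile_reflect u)), F1_alpha, beta_reflect by lra; f_equal; ring.
Qed.

Lemma Gamma_ref_phi t : Gamma_ref m c1 (phi t) = (alpha t, beta t).
Proof.
  pose proof PI_RGT_0.
  set (k := Int_part (t / (2 * PI))); set (u := t - IZR k * (2 * PI)).
  assert (Hu : 0 <= u < 2 * PI).
  { pose proof (floorR_div_bounds t (2 * PI)) as Hb; unfold floorR in Hb; fold k in Hb.
    unfold u; lra. }
  replace t with (u + IZR k * (2 * PI)) by (unfold u; ring).
  destruct (profile_shift_Z k u) as [Ea Eb].
  rewrite phi_shift, Gamma_ref_shift, Gamma_ref_phi_0_2PI, Ea, Eb, dval1_eq, dval3_eq by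
    (try apply phi_range; lra).
  replace (beta (2 * PI)) with (2 * beta PI - beta 0) by (rewrite <- beta_reflect; f_equal; ring).
  simpl; f_equal; ring.
Qed.

End Profile.

(** * The rotational surface *)

Lemma pd_t_tensor (f g : R -> R) t v df : is_derive f t df ->
  pd_t (fun t v => f t * g v) t v = df * g v.
Proof.
  intros Hf; apply is_derive_unique; rewrite <- (Rplus_0_r (df * g v)), <- (Rmult_0_r (f t)).
  apply (is_derive_Rmult f (fun _ => g v)); [exact Hf | auto_derive; auto].
Qed.

Lemma pd_v_tensor (f g : R -> R) t v dg : is_derive g v dg ->
  pd_v (fun t v => f t * g v) t v = f t * dg.
Proof.
  intros Hg; apply is_derive_unique; rewrite <- (Rplus_0_l (f t * dg)), <- (Rmult_0_l (g v)).
  apply (is_derive_Rmult (fun _ => f t) g); [auto_derive; auto | exact Hg].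
Qed.

Lemma pd_t_fun_t (f : R -> R) t v df : is_derive f t df -> pd_t (fun t _ => f t) t v = df.
Proof. intros Hf; apply is_derive_unique, Hf. Qed.

Lemma pd_v_fun_t (f : R -> R) t v : pd_v (fun t _ => f t) t v = 0.
Proof. unfold pd_v; apply Derive_const. Qed.

Lemma continuous_tensor (f g : R -> R) (p : R * R) :
  continuous f (fst p) -> continuous g (snd p) -> continuous (fun q : R * R => f (fst q) * g (snd q)) p.
Proof.
  intros Hf Hg; apply (continuous_mult (fun q : R * R => f (fst q)) (fun q : R * R => g (snd q))).
  - apply (continuous_comp fst f); [apply continuous_fst | exact Hf].
  - apply (continuous_comp snd g); [apply continuous_snd | exact Hg].
Qed.

Lemma C1_fun2_tensor (f df g dg : R -> R) :
  (forall t, is_derive f t (df t)) -> (forall t, continuous df t) ->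
  (forall v, is_derive g v (dg v)) -> (forall v, continuous dg v) ->
  C1_fun2 (fun t v => f t * g v).
Proof.
  intros Hf Hdf Hg Hdg; split.
  - intros t v; split; [exists (df t * g v) | exists (f t * dg v)].
    + rewrite <- (Rplus_0_r (df t * g v)), <- (Rmult_0_r (f t)).
      apply (is_derive_Rmult f (fun _ => g v)); [apply Hf | auto_derive; auto].
    + rewrite <- (Rplus_0_l (f t * dg v)), <- (Rmult_0_l (g v)).
      apply (is_derive_Rmult (fun _ => f t) g); [auto_derive; auto | apply Hg].
  - intros p; split; [|split].
    + apply continuous_tensor; eapply is_derive_continuous; eauto.
    + apply (continuous_ext (fun q : R * R => df (fst q) * g (snd q))).
      * intros q; symmetry; apply pd_t_tensor, Hf.
      * apply continuous_tensor; [apply Hdf | eapply is_derive_continuous; eauto].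
    + apply (continuous_ext (fun q : R * R => f (fst q) * dg (snd q))).
      * intros q; symmetry; apply pd_v_tensor, Hg.
      * apply continuous_tensor; [eapply is_derive_continuous; eauto | apply Hdg].
Qed.

Lemma C1_fun2_fun_t (f df : R -> R) :
  (forall t, is_derive f t (df t)) -> (forall t, continuous df t) -> C1_fun2 (fun t _ => f t).
Proof.
  intros Hf Hdf.
  replace (fun t (_ : R) => f t) with (fun t v => f t * (fun _ : R => 1) v)
    by (apply functional_extensionality; intros t; apply functional_extensionality; intros v; ring).
  apply (C1_fun2_tensor f df (fun _ => 1) (fun _ => 0)); auto.
  - intros; auto_derive; auto.
  - intros; apply continuous_const.
Qed.

Lemma rot_sqr r v : (r * cos v) ^ 2 + (r * sin v) ^ 2 = r ^ 2.
Proof.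
  pose proof (sin2_cos2 v) as E; unfold Rsqr in E.
  replace ((r * cos v) ^ 2 + (r * sin v) ^ 2) with (r ^ 2 * (sin v * sin v + cos v * cos v)) by ring.
  rewrite E; ring.
Qed.

Lemma Phi_rot m r v z : Phi m (r * cos v) (r * sin v) z = r ^ (2 * m) + z ^ (2 * m).
Proof. unfold Phi; rewrite rot_sqr, <- pow_mult; reflexivity. Qed.

Lemma gradPhi_rot m r v z : (1 <= m)%nat ->
  gradPhi1 m (r * cos v) (r * sin v) z = INR (2 * m) * r ^ (2 * m - 1) * cos v /\
  gradPhi2 m (r * cos v) (r * sin v) z = INR (2 * m) * r ^ (2 * m - 1) * sin v /\
  gradPhi3 m (r * cos v) (r * sin v) z = INR (2 * m) * z ^ (2 * m - 1).
Proof.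
  intros Hm.
  assert (Hsq : (r * cos v) * ((r * cos v) * 1) + (r * sin v) * ((r * sin v) * 1) = r ^ 2)
    by (rewrite <- (rot_sqr r v); ring).
  replace (r ^ (2 * m - 1)) with ((r ^ 2) ^ (m - 1) * r)
    by (rewrite (odd_exponent m Hm), pow_add, pow_mult, pow_1; reflexivity).
  unfold gradPhi1, gradPhi2, gradPhi3, Phi.
  repeat split; apply is_derive_unique; auto_derive; auto; rewrite ?Hsq.
  - replace (Init.Nat.pred m) with (m - 1)%nat by lia; rewrite mult_INR; simpl INR; ring.
  - replace (Init.Nat.pred m) with (m - 1)%nat by lia; rewrite mult_INR; simpl INR; ring.
  - replace (m + (m + 0))%nat with (2 * m)%nat by lia.
    replace (Init.Nat.pred (2 * m)) with (2 * m - 1)%nat by lia; ring.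
Qed.

Definition bg1 (m : nat) (t v : R) : R := eta_r m t * cos v.
Definition bg2 (m : nat) (t v : R) : R := eta_r m t * sin v.
Definition bg3 (m : nat) (t _ : R) : R := eta_z m t.

Section RotationalSurface.

Variables (m : nat) (c1 : R).
Hypothesis Hm : (1 <= m)%nat.
Hypothesis Hc : 0 < c1.

Lemma C1_fun2_gauss_map : C1_fun2 (bg1 m) /\ C1_fun2 (bg2 m) /\ C1_fun2 (bg3 m).
Proof.
  split; [|split].
  - apply (C1_fun2_tensor _ (deta_r m) _ (fun v => - sin v)); intros;
      [apply is_derive_eta_r, Hm | apply is_C2_continuous, is_C2_deta_r | apply is_derive_cos |
       apply continuous_Ropp, continuous_sin].
  - apply (C1_fun2_tensor _ (deta_r m) _ cos); intros;
      [apply is_derive_eta_r, Hm | apply is_C2_continuous, is_C2_deta_r | apply is_derive_sin |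
       apply continuous_cos].
  - apply (C1_fun2_fun_t (eta_z m) (deta_z m)); intros;
      [apply is_derive_eta_z, Hm | apply is_C2_continuous, is_C2_deta_z].
Qed.

Lemma surface_partials t v :
  pd_t (fs1 (alpha m c1)) t v = dalpha m c1 t * cos v /\
  pd_t (fs2 (alpha m c1)) t v = dalpha m c1 t * sin v /\
  pd_t (fs3 (beta m c1)) t v = dbeta m c1 t /\
  pd_v (fs1 (alpha m c1)) t v = alpha m c1 t * - sin v /\
  pd_v (fs2 (alpha m c1)) t v = alpha m c1 t * cos v /\
  pd_v (fs3 (beta m c1)) t v = 0.
Proof.
  unfold fs1, fs2, fs3; repeat split.
  - apply pd_t_tensor, is_derive_alpha; assumption.
  - apply pd_t_tensor, is_derive_alpha; assumption.
  - apply pd_t_fun_t, is_derive_beta; assumption.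
  - apply pd_v_tensor, is_derive_cos.
  - apply pd_v_tensor, is_derive_sin.
  - apply pd_v_fun_t.
Qed.

Lemma gauss_map_partials t v :
  pd_t (bg1 m) t v = deta_r m t * cos v /\
  pd_t (bg2 m) t v = deta_r m t * sin v /\
  pd_t (bg3 m) t v = deta_z m t /\
  pd_v (bg1 m) t v = eta_r m t * - sin v /\
  pd_v (bg2 m) t v = eta_r m t * cos v /\
  pd_v (bg3 m) t v = 0.
Proof.
  unfold bg1, bg2, bg3; repeat split.
  - apply pd_t_tensor, is_derive_eta_r, Hm.
  - apply pd_t_tensor, is_derive_eta_r, Hm.
  - apply pd_t_fun_t, is_derive_eta_z, Hm.
  - apply pd_v_tensor, is_derive_cos.
  - apply pd_v_tensor, is_derive_sin.
  - apply pd_v_fun_t.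
Qed.

Lemma is_BG_map_profile t v :
  is_BG_map_at m (fs1 (alpha m c1)) (fs2 (alpha m c1)) (fs3 (beta m c1)) (bg1 m) (bg2 m) (bg3 m) t v.
Proof.
  unfold is_BG_map_at; cbv zeta.
  destruct (surface_partials t v) as (P1 & P2 & P3 & P4 & P5 & P6); rewrite P1, P2, P3, P4, P5, P6.
  unfold bg1, bg2, bg3; rewrite Phi_rot.
  destruct (gradPhi_rot m (eta_r m t) v (eta_z m t) Hm) as (G1 & G2 & G3); rewrite G1, G2, G3.
  split; [apply eta_on_circle, Hm|].
  pose proof (pow_sum_cs_pos m t); pose proof (norm_cs_pos m t).
  pose proof (disc_pos m c1 Hc t); pose proof (alpha_pos m c1 Hc t).
  assert (0 < INR (2 * m)) by (apply lt_0_INR; lia).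
  assert (0 < norm_cs m t ^ (2 * m - 1)) by (apply pow_lt; lra).
  exists (INR (2 * m) * pow_sum_cs m t * norm_cs m t * disc m c1 t /
          (norm_cs m t ^ (2 * m - 1) * alpha m c1 t ^ 2)).
  split; [apply Rdiv_lt_0_compat; [repeat apply Rmult_lt_0_compat | apply Rmult_lt_0_compat]; try lra; nra |].
  set (a := alpha m c1 t); set (da := dalpha m c1 t).
  replace (da * cos v * (a * cos v) - da * sin v * (a * - sin v)) with (da * a)
    by (pose proof (sin2_cos2 v) as E; unfold Rsqr in E;
        transitivity (da * a * (sin v * sin v + cos v * cos v)); [rewrite E; ring | ring]).
  unfold a, da.
  unfold eta_r, eta_z, dalpha, dbeta, deta_r, deta_z.
  rewrite !pow_div, pow_opp_odd by (assumption || lra).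
  repeat split; field; repeat split; lra.
Qed.

Lemma mean_curvature_profile t v :
  mink_mean_curv_is (fs1 (alpha m c1)) (fs2 (alpha m c1)) (fs3 (beta m c1)) (bg1 m) (bg2 m) (bg3 m) t v 1.
Proof.
  destruct (surface_partials t v) as (P1 & P2 & P3 & P4 & P5 & P6).
  destruct (gauss_map_partials t v) as (Q1 & Q2 & Q3 & Q4 & Q5 & Q6).
  pose proof (disc_pos m c1 Hc t); pose proof (alpha_pos m c1 Hc t).
  exists (disc m c1 t / alpha m c1 t), 0, 0, (eta_r m t / alpha m c1 t).
  rewrite P1, P2, P3, P4, P5, P6, Q1, Q2, Q3, Q4, Q5, Q6.
  unfold dalpha, dbeta; repeat split; try (field; lra).
  replace (eta_r m t) with (2 * alpha m c1 t - disc m c1 t) by (unfold alpha; field); field; lra.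
Qed.

End RotationalSurface.

Theorem theorem6p3 (m : nat) (hm : (2 <= m)%nat) (c1 : R) (hc1 : 0 < c1) :
  ex_RInt_gen (integrand1 m c1) (at_right (b1 c1)) (at_point (sqrt c1)) /\
  ex_RInt_gen (integrand2 m c1) (at_point (sqrt c1)) (at_left (b4 c1)) /\
  0 < dval1 m c1 /\ 0 < dval3 m c1 /\
  exists (als bes phi : R -> R),
    (forall t1 t2, t1 < t2 -> phi t1 < phi t2) /\
    (forall t, continuous phi t) /\
    (forall s, exists t, phi t = s) /\
    (forall t, (als t, bes t) = Gamma_ref m c1 (phi t)) /\
    C2_fun als /\ C2_fun bes /\
    (forall t, Derive als t <> 0 \/ Derive bes t <> 0) /\
    exists e1 e2 e3 : R -> R -> R,
      C1_fun2 e1 /\ C1_fun2 e2 /\ C1_fun2 e3 /\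
      forall t v, 0 <= v <= 2 * PI ->
        is_BG_map_at m (fs1 als) (fs2 als) (fs3 bes) e1 e2 e3 t v /\
        mink_mean_curv_is (fs1 als) (fs2 als) (fs3 bes) e1 e2 e3 t v 1.
Proof.
  assert (Hm : (1 <= m)%nat) by lia.
  split; [exists (- beta m c1 0); apply is_RInt_gen_integrand1; assumption|].
  split; [exists (- beta m c1 PI); apply is_RInt_gen_integrand2; assumption|].
  split; [apply dval1_pos; assumption|].
  split; [apply dval3_pos; assumption|].
  exists (alpha m c1), (beta m c1), (phi m c1).
  split; [apply phi_lt; assumption|].
  split; [apply continuous_phi; assumption|].
  split; [apply phi_surj; assumption|].
  split; [intros t; symmetry; apply Gamma_ref_phi; assumption|].
  split; [apply is_C2_C2_fun, is_C2_alpha; assumption|].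
  split; [apply is_C2_C2_fun, is_C2_beta; assumption|].
  split; [apply profile_regular; assumption|].
  destruct (C1_fun2_gauss_map m Hm) as (C1 & C2 & C3).
  exists (bg1 m), (bg2 m), (bg3 m); split; [exact C1 | split; [exact C2 | split; [exact C3 |]]].
  intros t v _; split; [apply is_BG_map_profile | apply mean_curvature_profile]; assumption.
Qed.
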